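(* Let $r\ge1$ and let $\gamma_1,\dots,\gamma_{r+1},p_1,\dots,p_{r+1},a_1,\dots,a_{r+1}$ be indeterminates. Let $\mathrm{Wr}$ denote the relations (coefficientwise in $z=e^{\zeta}$) $$\frac{\det_{1\le i,j\le r+1}\big[z(1+\gamma_i)^{j-1}-p_i\gamma_i^{j-1}\big]}{\det_{1\le i,j\le r+1}\big[(1+\gamma_i)^{j-1}\big]}=\Lambda(z)=\prod_{i=1}^{r+1}(z-a_i),$$ and set ${\rm Fun}(t{\rm Op}_Z^{\Lambda})=\mathbb{C}(\gamma_i,p_i,a_i)/\mathrm{Wr}$. Let $t=(t_{ij})_{i,j=1}^{r+1}$ be the rational Ruijsenaars–Schneider Lax matrix $$t_{ij}=\frac{\prod_{m\neq j}(\gamma_i-\gamma_m-1)}{\prod_{l\neq j}(\gamma_j-\gamma_l)}\,p_i,$$ and define the rRS Hamiltonians by $\det(z-t)=\sum_k H^{rRS}_k(\{\gamma_i\},\{p_i\})z^k$. Then there is an isomorphism of algebras $${\rm Fun}(t{\rm Op}_Z^{\Lambda})\cong\mathbb{C}(\gamma_i,p_i,a_i)\Big/\Big(\text{relations }\det(z-t)=\prod_{i=1}^{r+1}(z-a_i)\text{ coefficientwise in }z\Big).$$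
   Context: ${\rm Fun}(t{\rm Op}_Z^{\Lambda})$ is the algebra of functions on the space of canonical trigonometrically $Z$-twisted Miura $SL(r+1)$-opers on $\mathbb{P}^1$, $Z=\mathrm{diag}(\gamma_1,\dots,\gamma_{r+1})$ regular semisimple: the oper connection is gauge equivalent to $\partial_z+Z/z$ (equivalently, in the cylinder coordinate $z=e^{\zeta}$, to $\partial_\zeta+Z$), the section of the line subbundle has degree-one monic components, the only regular singularities are the distinct roots $a_i$ of $\Lambda$, and the twisted Wronskian condition takes the form $\mathrm{Wr}$ above. *)

From HB Require Import structures.
From mathcomp Require Import all_boot all_order all_algebra.
From mathcomp Require Import complex.
From mathcomp Require Import reals.
Set Implicit Arguments. Unset Strict Implicit. Unset Printing Implicit Defensive.
Import Order.TTheory GRing.Theory Num.Theory.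
Local Open Scope ring_scope.

Section RRS.
Variables (B : comUnitRingType) (n : nat).
Implicit Types (g p a : 'I_n -> B).

(* numerator matrix of the twisted Wronskian: z (1+g_i)^(j-1) - p_i g_i^(j-1),
   j ranges over 'I_n starting at 0 so j here is j-1 of the paper *)
Definition Wr_mat g p : 'M[{poly B}]_n :=
  \matrix_(i, j) ('X * ((1 + g i) ^+ j)%:P - (p i * g i ^+ j)%:P).

Definition Vdm_mat g : 'M[B]_n := \matrix_(i, j) ((1 + g i) ^+ j).

Definition Lambda a : {poly B} := \prod_(i < n) ('X - (a i)%:P).

Definition Wr_rel g p a : Prop :=
  (\det (Vdm_mat g))^-1 *: \det (Wr_mat g p) = Lambda a.

Definition rRS_Lax g p : 'M[B]_n :=
  \matrix_(i, j) ((\prod_(m < n | m != j) (g i - g m - 1))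
                  / (\prod_(l < n | l != j) (g j - g l)) * p i).

Definition rRS_rel g p a : Prop := char_poly (rRS_Lax g p) = Lambda a.

End RRS.

From HB Require Import structures.
From mathcomp Require Import all_boot all_order all_algebra.
From mathcomp Require Import complex.
From mathcomp Require Import reals.
Import Order.TTheory GRing.Theory Num.Theory.
Local Open Scope ring_scope.
Local Open Scope complex_scope.

(* Let V = ((1 + g_i)^k)_{i,k} be the Vandermonde matrix of the nodes 1 + g_j.
   The Lax entry t_ij is p_i times the j-th Lagrange basis polynomial of these
   nodes evaluated at g_i, so interpolating y^k (k < n) gives
   t V = (p_i g_i^k)_{i,k}.  Hence the Wronskian matrix factors as (z - t) V,
   and det V is invertible, so the Wronskian relations say exactly
   det (z - t) = Lambda(z).  This works over any commutative ring in which the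
   differences g_i - g_j are invertible. *)

Section Lagrange.
Set Implicit Arguments.
Unset Strict Implicit.
Variables (R : comUnitRingType) (n : nat) (x : 'I_n -> R).
Hypothesis x_diff_unit : forall i j, i != j -> x i - x j \is a GRing.unit.

Definition lagrange_basis j : {poly R} :=
  (\prod_(m < n | m != j) (x j - x m))^-1 *: \prod_(m < n | m != j) ('X - (x m)%:P).

Lemma horner_lagrange_basis j y :
  (lagrange_basis j).[y] =
    (\prod_(m < n | m != j) (y - x m)) / \prod_(m < n | m != j) (x j - x m).
Proof.
rewrite hornerZ horner_prod mulrC; congr (_ * _).
by apply: eq_bigr => m _; rewrite hornerXsubC.
Qed.

Lemma size_lagrange_basis j : (size (lagrange_basis j) <= n)%N.
Proof.
apply: leq_trans (size_scale_leq _ _) _.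
rewrite -big_filter size_prod_XsubC; have [e _ _ [_ ->]] := big_enumP.
by rewrite cardC1 card_ord prednK // (leq_ltn_trans _ (ltn_ord j)).
Qed.

Lemma lagrange_basis_node j l : (lagrange_basis j).[x l] = (j == l)%:R.
Proof.
rewrite horner_lagrange_basis; have [<-|ne_jl] := eqVneq j l.
  by rewrite divrr // unitr_prod // => m; rewrite eq_sym; apply: x_diff_unit.
by rewrite (bigD1 l) 1?eq_sym //= subrr !mul0r.
Qed.

Lemma uniq_roots_nodes (s : seq 'I_n) : uniq s -> uniq_roots [seq x i | i <- s].
Proof.
elim: s => //= i s IHs /andP[i_notin_s uniq_s]; rewrite IHs // andbT.
apply/allP => _ /mapP[j j_in_s ->]; rewrite /diff_roots mulrC eqxx /=.
by apply: x_diff_unit; apply: contraNneq i_notin_s => <-.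
Qed.

Lemma poly_eq0_on_nodes (q : {poly R}) :
  (size q <= n)%N -> (forall i, q.[x i] = 0) -> q = 0.
Proof.
move=> size_q q_nodes; apply: contraTeq size_q => q_neq0; rewrite -ltnNge.
have := max_ring_poly_roots q_neq0 _ (uniq_roots_nodes (enum_uniq 'I_n)).
rewrite size_map size_enum_ord; apply; apply/allP => _ /mapP[i _ ->].
exact/eqP/q_nodes.
Qed.

Lemma lagrange_interpolation (q : {poly R}) :
  (size q <= n)%N -> q = \sum_j q.[x j] *: lagrange_basis j.
Proof.
move=> size_q; apply/eqP; rewrite -subr_eq0; apply/eqP/poly_eq0_on_nodes.
  apply: leq_trans (size_polyD _ _) _; rewrite geq_max size_q size_polyN.
  apply: leq_trans (size_sum _ _ _) _; apply/bigmax_leqP => j _.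
  exact: leq_trans (size_scale_leq _ _) (size_lagrange_basis j).
move=> l; rewrite hornerD hornerN horner_sum (bigD1 l) //= big1 => [|j ne_jl].
  by rewrite hornerZ lagrange_basis_node eqxx mulr1 addr0 subrr.
by rewrite hornerZ lagrange_basis_node (negbTE ne_jl) mulr0.
Qed.

End Lagrange.

Section RuijsenaarsSchneider.
Set Implicit Arguments.
Unset Strict Implicit.
Variables (R : comUnitRingType) (n : nat) (g p : 'I_n -> R).
Hypothesis g_diff_unit : forall i j, i != j -> g i - g j \is a GRing.unit.

Let shift_diff_unit i j : i != j -> (1 + g i) - (1 + g j) \is a GRing.unit.
Proof. by move=> ne_ij; rewrite opprD addrACA subrr add0r; apply: g_diff_unit. Qed.

Lemma rRS_LaxE i j :
  rRS_Lax g p i j = (lagrange_basis (fun m => 1 + g m) j).[g i] * p i.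
Proof.
rewrite mxE horner_lagrange_basis; congr (_ / _ * _); apply: eq_bigr => m _.
  by rewrite opprD addrA addrAC.
by rewrite opprD addrACA subrr add0r.
Qed.

Lemma rRS_Lax_mulmx_Vdm :
  rRS_Lax g p *m Vdm_mat g = \matrix_(i, k) (p i * g i ^+ k).
Proof.
apply/matrixP => i k; rewrite !mxE.
have size_Xk : (size ('X^k : {poly R}) <= n)%N by rewrite size_polyXn.
have := congr1 (horner^~ (g i)) (lagrange_interpolation shift_diff_unit size_Xk).
rewrite hornerXn horner_sum => ->; rewrite mulr_sumr; apply: eq_bigr => j _.
by rewrite rRS_LaxE !mxE hornerZ hornerXn mulrAC mulrC [_ ^+ k * _]mulrC.
Qed.

Lemma Wr_mat_factor :
  Wr_mat g p = char_poly_mx (rRS_Lax g p) *m map_mx polyC (Vdm_mat g).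
Proof.
rewrite mulmxBl mul_scalar_mx -map_mxM rRS_Lax_mulmx_Vdm.
by apply/matrixP => i k; rewrite !mxE.
Qed.

Lemma det_Vdm_mat_unit : \det (Vdm_mat g) \is a GRing.unit.
Proof.
have -> : Vdm_mat g = (Vandermonde n (\row_j (1 + g j)))^T.
  by apply/matrixP => i j; rewrite !mxE.
rewrite det_tr det_Vandermonde; apply: unitr_prod => i _.
apply: unitr_prod => j lt_ij; rewrite !mxE; apply: shift_diff_unit.
by rewrite neq_ltn lt_ij orbT.
Qed.

Lemma det_Wr_mat : \det (Wr_mat g p) = \det (Vdm_mat g) *: char_poly (rRS_Lax g p).
Proof. by rewrite Wr_mat_factor det_mulmx det_map_mx mulrC mul_polyC. Qed.

End RuijsenaarsSchneider.

Theorem mainTheorem6 (R : realType) (r : nat) (hr : (1 <= r)%N)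
    (B : comUnitAlgType R[i]) (g p a : 'I_r.+1 -> B) :
  (forall i j : 'I_r.+1, i != j -> g i - g j \is a GRing.unit) ->
  (Wr_rel g p a <-> rRS_rel g p a).
Proof.
move=> g_diff_unit.
by rewrite /Wr_rel det_Wr_mat // scalerA mulVr ?scale1r // det_Vdm_mat_unit.
Qed.
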